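(* Consider the heteroscedastic linear model $y(i,k)=\tau_i+\mu+\mathbf g^T(k)\beta+\varepsilon(i,k)$ with treatments $i\in\{1,\ldots,v_1\}$, covariate indices $k\in\{1,\ldots,d\}$, known regressors $\mathbf g(k)\in\mathbb R^{v_2}$, uncorrelated mean-zero errors with $\mathrm{Var}(\varepsilon(i,k))=\sigma^2/\lambda_i$, $\lambda_i>0$ known. Let $\Phi$ be an eigenvalue-based information function and let $\xi^*=w^*\otimes\alpha^*$ be a product design that is $\Phi$-optimal for $\mathbf A^T\theta$. Let $\xi$ be a design satisfying $\mathbf M(\xi)\mathbf G\mathbf A=\mathbf A$, where $$\mathbf G=\mathrm{diag}\Big(\mathbf M_1^{-1}(w^* ),\ \big(\textstyle\sum_i\lambda_iw_i^*\big)^{-1}\mathbf M_2^-(\alpha^* )\Big)$$ and $\mathbf M_2^-(\alpha^* )$ is any generalized inverse of $\mathbf M_2(\alpha^* )$. Then $\xi$ is $\Phi$-optimal for $\mathbf A^T\theta$. In particular, let $\mathbf S^-(\alpha^* )$ be a generalized inverse of $\mathbf S(\alpha^* )$ and let $\xi$ be a design with marginal treatment design $w$ satisfying (a) $w_i=w_i^*$ for $i=1,\ldots,v_1$; (b) $\Big[\frac{1}{w_1^*}\sum_{k=1}^d\xi(1,k)\mathbf g(k),\ldots,\frac{1}{w_{v_1}^*}\sum_{k=1}^d\xi(v_1,k)\mathbf g(k)\Big]\mathbf Q_1=\mathbf 0_{v_2\times s_1}$; (c) the $v_1\times v_2$ matrix whose $i$th row is $\sum_k(\xi(i,k)-w_i^*\alpha_k^*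 )\mathbf g^T(k)$, multiplied on the right by $\mathbf S^-(\alpha^* )\mathbf K$, equals $\mathbf 0_{v_1\times s_2}$; (d) $\big(\sum_{i=1}^{v_1}\lambda_iw_i^*\big)^{-1}\Big(\sum_{i,k}\lambda_i\xi(i,k)\mathbf g(k)\mathbf g^T(k)-\big(\sum_{i,k}\lambda_i\xi(i,k)\mathbf g(k)\big)\sum_{k=1}^{d}\alpha_k^*\mathbf g^T(k)\Big)\mathbf S^-(\alpha^* )\mathbf K=\mathbf K$. Then $\xi$ is $\Phi$-optimal for $\mathbf A^T\theta$.
   Context: Write $\theta=(\tau^T,\mu,\beta^T)^T$, $\mathbf h(k)=(1,\mathbf g^T(k))^T$, $\mathbf f(i,k)=(\mathbf e_i^T,1,\mathbf g^T(k))^T$. A design $\xi$ is a nonnegative function on $\{1,\ldots,v_1\}\times\{1,\ldots,d\}$ summing to one, with moment matrix $\mathbf M(\xi)=\sum_{i,k}\xi(i,k)\lambda_i\mathbf f(i,k)\mathbf f^T(i,k)$; its marginal treatment design is $w_i=\sum_k\xi(i,k)$ and marginal covariate design $\alpha_k=\sum_i\xi(i,k)$. A product design is $(w\otimes\alpha)(i,k)=w_i\alpha_k$ for probability vectors $w\in\mathbb R^{v_1}$, $\alpha\in\mathbb R^d$. Let $\mathbf Q_1\in\mathbb R^{v_1\times s_1}$ have full column rank, satisfy $\mathbf Q_1^T\mathbf 1_{v_1}=\mathbf 0$ and have no zero row; let $\mathbf K\in\mathbb R^{v_2\times s_2}$ have full column rank; $\mathbf Q_2=(\mathbf 0_{s_2},\mathbf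 K^T)^T$, $\mathbf A=\mathrm{diag}(\mathbf Q_1,\mathbf Q_2)$. A design is feasible for $\mathbf A^T\theta$ if $\mathcal C(\mathbf A)\subseteq\mathcal C(\mathbf M(\xi))$, with information matrix $\mathbf N_{\mathbf A}(\xi)=(\mathbf A^T\mathbf M^-(\xi)\mathbf A)^{-1}$; it is $\Phi$-optimal if feasible and maximizing $\Phi(\mathbf N_{\mathbf A}(\xi))$ over feasible designs. Notation: $\mathbf M_1(w)=\mathrm{diag}(\lambda_1w_1,\ldots,\lambda_{v_1}w_{v_1})$; $\mathbf M_2(\alpha)=\sum_k\alpha_k\mathbf h(k)\mathbf h^T(k)$; $\mathbf S(\alpha)=\sum_k\alpha_k\mathbf g(k)\mathbf g^T(k)-(\sum_k\alpha_k\mathbf g(k))(\sum_k\alpha_k\mathbf g(k))^T$. An information function is a positively homogeneous, concave, nonnegative, nonconstant, upper semicontinuous function on nonnegative definite $(s_1+s_2)\times(s_1+s_2)$ matrices; it is eigenvalue-based if it depends only on the eigenvalues of its argument. *)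

From HB Require Import structures.
From mathcomp Require Import all_boot all_order all_algebra.
From mathcomp Require Import reals.
Set Implicit Arguments. Unset Strict Implicit. Unset Printing Implicit Defensive.
Import Order.TTheory GRing.Theory Num.Theory.
Local Open Scope ring_scope.

Section Defs.
Variable R : realType.

Definition nnd (n : nat) (C : 'M[R]_n) : Prop :=
  C^T = C /\ forall x : 'cV[R]_n, 0 <= (x^T *m C *m x) ord0 ord0.

Definition information_function (n : nat) (Phi : 'M[R]_n -> R) : Prop :=
  [/\
      (forall (c : R) (C : 'M[R]_n), nnd C -> 0 < c -> Phi (c *: C) = c * Phi C),
      (forall (t : R) (C D : 'M[R]_n), nnd C -> nnd D -> 0 <= t -> t <= 1 ->
          t * Phi C + (1 - t) * Phi D <= Phi (t *: C + (1 - t) *: D)),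
      (forall C : 'M[R]_n, nnd C -> 0 <= Phi C),
      (exists C D : 'M[R]_n, [/\ nnd C, nnd D & Phi C <> Phi D]) &
      (forall C : 'M[R]_n, nnd C -> forall e : R, 0 < e ->
         exists2 delta : R, 0 < delta &
           forall D : 'M[R]_n, nnd D -> (forall i j, `|D i j - C i j| < delta) ->
             Phi D < Phi C + e)].

(* depends only on the eigenvalues (with multiplicities), i.e. on the
   characteristic polynomial, of its (symmetric) argument *)
Definition eigenvalue_based (n : nat) (Phi : 'M[R]_n -> R) : Prop :=
  forall C D : 'M[R]_n, nnd C -> nnd D -> char_poly C = char_poly D -> Phi C = Phi D.

Definition ginv (n : nat) (M G : 'M[R]_n) : Prop := M *m G *m M = M.

Definition prob_vec (n : nat) (w : 'I_n -> R) : Prop :=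
  (forall i, 0 <= w i) /\ \sum_(i < n) w i = 1.

Definition design (v1 d : nat) (xi : 'I_v1 -> 'I_d -> R) : Prop :=
  (forall i k, 0 <= xi i k) /\ \sum_(i < v1) \sum_(k < d) xi i k = 1.

Definition prod_design (v1 d : nat) (w : 'I_v1 -> R) (alpha : 'I_d -> R) :
  'I_v1 -> 'I_d -> R := fun i k => w i * alpha k.

Definition marg_treat (v1 d : nat) (xi : 'I_v1 -> 'I_d -> R) (i : 'I_v1) : R :=
  \sum_(k < d) xi i k.

Definition marg_cov (v1 d : nat) (xi : 'I_v1 -> 'I_d -> R) (k : 'I_d) : R :=
  \sum_(i < v1) xi i k.

Definition hvec (v2 d : nat) (g : 'I_d -> 'cV[R]_v2) (k : 'I_d) : 'cV[R]_(1 + v2) :=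
  col_mx (const_mx 1) (g k).

Definition fvec (v1 v2 d : nat) (g : 'I_d -> 'cV[R]_v2) (i : 'I_v1) (k : 'I_d) :
  'cV[R]_(v1 + (1 + v2)) :=
  col_mx (delta_mx i ord0) (hvec g k).

Definition momM (v1 v2 d : nat) (lambda : 'I_v1 -> R) (g : 'I_d -> 'cV[R]_v2)
  (xi : 'I_v1 -> 'I_d -> R) : 'M[R]_(v1 + (1 + v2)) :=
  \sum_(i < v1) \sum_(k < d) (xi i k * lambda i) *: (fvec g i k *m (fvec g i k)^T).

Definition M1 (v1 : nat) (lambda w : 'I_v1 -> R) : 'M[R]_v1 :=
  diag_mx (\row_i (lambda i * w i)).

Definition M2 (v2 d : nat) (g : 'I_d -> 'cV[R]_v2) (alpha : 'I_d -> R) : 'M[R]_(1 + v2) :=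
  \sum_(k < d) alpha k *: (hvec g k *m (hvec g k)^T).

Definition Smat (v2 d : nat) (g : 'I_d -> 'cV[R]_v2) (alpha : 'I_d -> R) : 'M[R]_v2 :=
  \sum_(k < d) alpha k *: (g k *m (g k)^T)
  - (\sum_(k < d) alpha k *: g k) *m (\sum_(k < d) alpha k *: g k)^T.

(* A = diag(Q1, Q2), Q2 = (0_{s2}, K^T)^T *)
Definition Amat (v1 v2 s1 s2 : nat) (Q1 : 'M[R]_(v1, s1)) (K : 'M[R]_(v2, s2)) :
  'M[R]_(v1 + (1 + v2), s1 + s2) :=
  block_mx Q1 0 0 (col_mx (0 : 'M[R]_(1, s2)) K).

(* feasibility: C(A) is contained in C(M(xi)) *)
Definition feasible (v1 v2 d s1 s2 : nat) (lambda : 'I_v1 -> R) (g : 'I_d -> 'cV[R]_v2)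
  (Q1 : 'M[R]_(v1, s1)) (K : 'M[R]_(v2, s2)) (xi : 'I_v1 -> 'I_d -> R) : Prop :=
  ((Amat Q1 K)^T <= (momM lambda g xi)^T)%MS.

(* information matrix N_A(xi) = (A^T M^-(xi) A)^{-1}, with the generalized
   inverse M^- := pinvmx M (any g-inverse gives the same value for feasible xi) *)
Definition info_mx (v1 v2 d s1 s2 : nat) (lambda : 'I_v1 -> R) (g : 'I_d -> 'cV[R]_v2)
  (Q1 : 'M[R]_(v1, s1)) (K : 'M[R]_(v2, s2)) (xi : 'I_v1 -> 'I_d -> R) :
  'M[R]_(s1 + s2) :=
  invmx ((Amat Q1 K)^T *m pinvmx (momM lambda g xi) *m Amat Q1 K).

Definition Phi_optimal (v1 v2 d s1 s2 : nat) (lambda : 'I_v1 -> R) (g : 'I_d -> 'cV[R]_v2)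
  (Q1 : 'M[R]_(v1, s1)) (K : 'M[R]_(v2, s2)) (Phi : 'M[R]_(s1 + s2) -> R)
  (xi : 'I_v1 -> 'I_d -> R) : Prop :=
  [/\ design xi, feasible lambda g Q1 K xi &
      forall xi' : 'I_v1 -> 'I_d -> R, design xi' -> feasible lambda g Q1 K xi' ->
        Phi (info_mx lambda g Q1 K xi') <= Phi (info_mx lambda g Q1 K xi)].

End Defs.

(* If M(xi) G A = A, the columns of A lie in the range of the symmetric matrix
   M(xi) and A^T M(xi)^- A = A^T G^T A, so the information matrix of xi depends
   on G only.  Hence, once the optimal product design xi0 also satisfies
   M(xi0) G A = A, every design xi with M(xi) G A = A has the information matrix
   of xi0 and is optimal; Phi enters only through the optimality of xi0.
   For xi0 = w0 (x) alpha0, M(xi0) = [[M1, m1 m2^T], [m2 m1^T, c M2]] with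
   m1 = M1 1, m2 = M2 e1 and c = sum_i lambda_i w0_i.  Feasibility of xi0 forces
   w0 > 0 (Q1 has no zero row) and puts Q2 in the range of M2, while 1^T Q1 = 0
   and e1^T Q2 = 0 kill the off-diagonal blocks, so G = diag(M1^-1, c^-1 M2^-)
   works.  In the second part M2 = L diag(1, S) L^T with L = [[1, 0], [gbar, I]],
   so L^-T diag(1, S^-) L^-1 is a generalized inverse of M2, and for this G the
   four blocks of M(xi) G A = A are conditions (a)-(d). *)

From HB Require Import structures.
From mathcomp Require Import all_boot all_order all_algebra.
From mathcomp Require Import reals.
From mathcomp Require Import ring.
Import Order.TTheory GRing.Theory Num.Theory.
Local Open Scope ring_scope.
Set Implicit Arguments.
Unset Strict Implicit.
Unset Printing Implicit Defensive.

Section BlockSums.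
Variables (V : nmodType) (I : Type) (r : seq I) (P : pred I).

Lemma summx_col_mx m1 m2 n (A : I -> 'M[V]_(m1, n)) (B : I -> 'M[V]_(m2, n)) :
  \sum_(i <- r | P i) col_mx (A i) (B i) =
  col_mx (\sum_(i <- r | P i) A i) (\sum_(i <- r | P i) B i).
Proof. by elim/big_rec3: _ => [|i x y z _ ->]; rewrite ?col_mx0 ?add_col_mx. Qed.

Lemma summx_row_mx m n1 n2 (A : I -> 'M[V]_(m, n1)) (B : I -> 'M[V]_(m, n2)) :
  \sum_(i <- r | P i) row_mx (A i) (B i) =
  row_mx (\sum_(i <- r | P i) A i) (\sum_(i <- r | P i) B i).
Proof. by elim/big_rec3: _ => [|i x y z _ ->]; rewrite ?row_mx0 ?add_row_mx. Qed.

Lemma summx_block_mx m1 m2 n1 n2 (A : I -> 'M[V]_(m1, n1)) (B : I -> 'M[V]_(m1, n2))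
    (C : I -> 'M[V]_(m2, n1)) (D : I -> 'M[V]_(m2, n2)) :
  \sum_(i <- r | P i) block_mx (A i) (B i) (C i) (D i) =
  block_mx (\sum_(i <- r | P i) A i) (\sum_(i <- r | P i) B i)
           (\sum_(i <- r | P i) C i) (\sum_(i <- r | P i) D i).
Proof.
rewrite block_mxEv -!summx_row_mx -summx_col_mx.
by apply: eq_bigr => i _; rewrite block_mxEv.
Qed.

End BlockSums.

Lemma const_mx11 (R : pzSemiRingType) : (const_mx 1 : 'M[R]_1) = 1%:M.
Proof. by apply/matrixP => i j; rewrite !mxE !ord1 eqxx. Qed.

Lemma const_mul_eq0 (R : comPzSemiRingType) m n (Q : 'M[R]_(m, n)) :
  Q^T *m (const_mx 1 : 'cV[R]_m) = 0 -> (const_mx 1 : 'rV[R]_m) *m Q = 0.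
Proof. by move=> Q_sum0; apply/trmx_inj; rewrite trmx_mul trmx_const Q_sum0 trmx0. Qed.

Lemma matrix_sum_delta_row (R : pzSemiRingType) m n (r : 'I_m -> 'rV[R]_n) :
  \matrix_i r i = \sum_i delta_mx i 0 *m r i.
Proof.
apply/matrixP => i j; rewrite summxE (bigD1 i) //= big1 => [|i' i'i].
  by rewrite !mxE big_ord1 !mxE !eqxx mul1r addr0.
by rewrite mxE big_ord1 mxE eq_sym (negPf i'i) mul0r.
Qed.

Section GeneralizedInverses.
Variable F : fieldType.

Lemma sub_trmxP m1 m2 n (A : 'M[F]_(m1, n)) (B : 'M[F]_(m1, m2)) :
  reflect (exists D, A = B *m D) (A^T <= B^T)%MS.
Proof.
apply: (iffP submxP) => [[D AD] | [D ->]]; last by exists D^T; rewrite trmx_mul.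
by exists D^T; rewrite -[A]trmxK AD trmx_mul trmxK.
Qed.

Lemma pinvmx_form_ginv n p (M G : 'M[F]_n) (A : 'M[F]_(n, p)) :
  M^T = M -> M *m G *m A = A -> A^T *m pinvmx M *m A = A^T *m G^T *m A.
Proof.
move=> Msym MGA; have : M *m pinvmx M *m M = M by rewrite mulmxKpV.
move: (pinvmx M) => P MPM.
rewrite -{1 2}MGA !trmx_mul Msym -!mulmxA.
by rewrite (mulmxA P) (mulmxA M (P *m M)) (mulmxA M P) MPM (mulmxA M G) MGA.
Qed.

End GeneralizedInverses.

Lemma ginv_congruence (R : comPzRingType) n (L Li D Dg : 'M[R]_n) :
  Li *m L = 1%:M -> D *m Dg *m D = D ->
  (L *m D *m L^T) *m (Li^T *m Dg *m Li) *m (L *m D *m L^T) = L *m D *m L^T.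
Proof.
move=> LiL DDgD; have LLi : L^T *m Li^T = 1%:M by rewrite -trmx_mul LiL trmx1.
rewrite !mulmxA -(mulmxA _ L^T) LLi mulmx1 -(mulmxA _ Li) LiL mulmx1.
by rewrite -(mulmxA L D Dg) -(mulmxA L) DDgD.
Qed.

Section Designs.
Variables (R : realType) (v1 v2 d : nat) (lambda : 'I_v1 -> R) (g : 'I_d -> 'cV[R]_v2).
Implicit Types (xi : 'I_v1 -> 'I_d -> R) (w : 'I_v1 -> R) (a : 'I_d -> R).

Lemma hvec_mul_tr k :
  hvec g k *m (hvec g k)^T = block_mx 1%:M (g k)^T (g k) (g k *m (g k)^T).
Proof. by rewrite /hvec tr_col_mx mul_col_row trmx_const const_mx11 !mul1mx !mulmx1. Qed.

Lemma tr_hvec_mul_col p k (t : 'M[R]_(1, p)) (z : 'M[R]_(v2, p)) :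
  (hvec g k)^T *m col_mx t z = t + (g k)^T *m z.
Proof. by rewrite /hvec tr_col_mx mul_row_col trmx_const const_mx11 mul1mx. Qed.

Definition momM_cross xi : 'M[R]_(v1, 1 + v2) :=
  \matrix_i (lambda i *: \sum_k xi i k *: (hvec g k)^T).

Definition momM_cov xi : 'M[R]_(1 + v2) :=
  \sum_i \sum_k (xi i k * lambda i) *: (hvec g k *m (hvec g k)^T).

Lemma momM_block xi :
  momM lambda g xi = block_mx (M1 lambda (marg_treat xi)) (momM_cross xi)
                              (momM_cross xi)^T (momM_cov xi).
Proof.
have cross : \sum_i \sum_k (xi i k * lambda i) *: (delta_mx i 0 *m (hvec g k)^T)
             = momM_cross xi.
  rewrite /momM_cross matrix_sum_delta_row; apply: eq_bigr => i _.
  rewrite scaler_sumr mulmx_sumr; apply: eq_bigr => k _.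
  by rewrite scalerA -!scalemxAr mulrC.
rewrite /momM.
under eq_bigr => i _ do under eq_bigr => k _ do
  rewrite /fvec tr_col_mx mul_col_row scale_block_mx.
under eq_bigr => i _ do rewrite summx_block_mx.
rewrite summx_block_mx cross; congr block_mx.
- rewrite /M1 diag_mx_sum_delta; apply: eq_bigr => i _.
  rewrite mxE /marg_treat mulr_sumr scaler_suml; apply: eq_bigr => k _.
  by rewrite trmx_delta mul_delta_mx mulrC.
- rewrite -cross !raddf_sum; apply: eq_bigr => i _; rewrite raddf_sum.
  by apply: eq_bigr => k _; rewrite /= linearZ /= trmx_mul trmxK.
Qed.

Lemma momM_sym xi : (momM lambda g xi)^T = momM lambda g xi.
Proof.
rewrite /momM raddf_sum; apply: eq_bigr => i _; rewrite /= raddf_sum.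
by apply: eq_bigr => k _; rewrite /= linearZ /= trmx_mul trmxK.
Qed.

Lemma M2_sym a : (M2 g a)^T = M2 g a.
Proof.
rewrite /M2 raddf_sum; apply: eq_bigr => k _.
by rewrite /= linearZ /= trmx_mul trmxK.
Qed.

Lemma M1_unitmx w : (forall i, 0 < lambda i) -> (forall i, 0 < w i) ->
  M1 lambda w \in unitmx.
Proof.
move=> lambda_gt0 w_gt0; rewrite unitmxE /M1 det_diag unitfE prodf_seq_neq0.
by apply/allP => i _ /=; rewrite mxE mulf_neq0 // gt_eqF.
Qed.

Lemma sum_lambda_w_neq0 w : (forall i, 0 < lambda i) -> prob_vec w ->
  \sum_i lambda i * w i != 0.
Proof.
move=> lambda_gt0 [w_ge0 w_sum1]; apply: contra_eqN w_sum1 => /eqP /psumr_eq0P sum0.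
suff -> : \sum_i w i = 0 by rewrite eq_sym oner_neq0.
apply: big1 => i _.
have /eqP := sum0 (fun j _ => mulr_ge0 (ltW (lambda_gt0 j)) (w_ge0 j)) i isT.
by rewrite mulf_eq0 gt_eqF //= => /eqP.
Qed.

Lemma tr_M1 w : (M1 lambda w)^T = M1 lambda w.
Proof. exact: tr_diag_mx. Qed.

Lemma row_M1_mul w p (X : 'M[R]_(v1, p)) i :
  row i (M1 lambda w *m X) = (lambda i * w i) *: row i X.
Proof. by rewrite row_mul row_diag_mx mxE -scalemxAl -rowE. Qed.

Lemma tr_const_mul_M1_inv w s1 (Q1 : 'M[R]_(v1, s1)) :
  M1 lambda w \in unitmx -> Q1^T *m (const_mx 1 : 'cV[R]_v1) = 0 ->
  (M1 lambda w *m (const_mx 1 : 'cV[R]_v1))^T *m invmx (M1 lambda w) *m Q1 = 0.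
Proof.
move=> M1_unit Q1_sum0.
rewrite trmx_mul tr_M1 -!mulmxA (mulmxA (M1 lambda w)) mulmxV // mul1mx.
by rewrite trmx_const const_mul_eq0.
Qed.

Section InformationFromFactorization.
Variables (s1 s2 : nat) (Q1 : 'M[R]_(v1, s1)) (K : 'M[R]_(v2, s2)).
Variable G : 'M[R]_(v1 + (1 + v2)).

Lemma feasible_of_mulmx xi :
  momM lambda g xi *m G *m Amat Q1 K = Amat Q1 K -> feasible lambda g Q1 K xi.
Proof. by move=> MGA; apply/sub_trmxP; exists (G *m Amat Q1 K); rewrite mulmxA. Qed.

Lemma info_mx_of_mulmx xi :
  momM lambda g xi *m G *m Amat Q1 K = Amat Q1 K ->
  info_mx lambda g Q1 K xi = invmx ((Amat Q1 K)^T *m G^T *m Amat Q1 K).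
Proof. by move=> MGA; rewrite /info_mx (pinvmx_form_ginv (momM_sym xi) MGA). Qed.

Lemma Phi_optimal_of_mulmx Phi xi0 xi :
  Phi_optimal lambda g Q1 K Phi xi0 -> design xi ->
  momM lambda g xi *m G *m Amat Q1 K = Amat Q1 K ->
  momM lambda g xi0 *m G *m Amat Q1 K = Amat Q1 K ->
  Phi_optimal lambda g Q1 K Phi xi.
Proof.
move=> [_ _ opt0] xi_design MGA M0GA; split=> //; first exact: feasible_of_mulmx MGA.
move=> xi' xi'_design xi'_feas.
by rewrite (info_mx_of_mulmx MGA) -(info_mx_of_mulmx M0GA) opt0.
Qed.

End InformationFromFactorization.

Local Notation e1 := (col_mx 1%:M 0 : 'cV[R]_(1 + v2)).

Lemma M2_mul_e1 a : M2 g a *m e1 = \sum_k a k *: hvec g k.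
Proof.
rewrite /M2 mulmx_suml; apply: eq_bigr => k _.
by rewrite -scalemxAl -mulmxA tr_hvec_mul_col mulmx0 addr0 mulmx1.
Qed.

Lemma momM_prod_design w a : \sum_k a k = 1 ->
  momM lambda g (prod_design w a) =
  block_mx (M1 lambda w) (M1 lambda w *m const_mx 1 *m (M2 g a *m e1)^T)
           (M2 g a *m e1 *m (M1 lambda w *m const_mx 1)^T)
           ((\sum_i lambda i * w i) *: M2 g a).
Proof.
move=> a_sum1; rewrite momM_block.
have -> : M1 lambda (marg_treat (prod_design w a)) = M1 lambda w.
  by apply/matrixP => i j; rewrite !mxE /marg_treat /prod_design -mulr_sumr a_sum1 mulr1.
have -> : momM_cross (prod_design w a) = M1 lambda w *m const_mx 1 *m (M2 g a *m e1)^T.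
  apply/row_matrixP => i; rewrite rowK row_mul row_M1_mul row_const const_mx11.
  rewrite -scalemxAl mul1mx M2_mul_e1 [X in _ = _ *: X]raddf_sum /= !scaler_sumr.
  apply: eq_bigr => k _; rewrite [(a k *: _)^T]linearZ /= !scalerA /prod_design.
  by congr (_ *: _); ring.
rewrite [(M1 lambda w *m _ *m _)^T]trmx_mul trmxK; congr block_mx.
rewrite /momM_cov /M2 scaler_suml; apply: eq_bigr => i _.
rewrite scaler_sumr; apply: eq_bigr => k _.
by rewrite scalerA /prod_design; congr (_ *: _); ring.
Qed.

Section ProductDesign.
Variables (s1 s2 : nat) (Q1 : 'M[R]_(v1, s1)) (K : 'M[R]_(v2, s2)).
Variables (w : 'I_v1 -> R) (a : 'I_d -> R).
Hypothesis a_sum1 : \sum_k a k = 1.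
Hypothesis feasible_wa : feasible lambda g Q1 K (prod_design w a).

Lemma prod_design_weights_gt0 :
  (forall i, row i Q1 != 0) -> (forall i, 0 <= w i) -> forall i, 0 < w i.
Proof.
move=> Q1_rows w_ge0 i; have /sub_trmxP[X AX] := feasible_wa.
rewrite lt_def w_ge0 andbT; apply: contraNneq (Q1_rows i) => w0; apply/eqP.
move: AX; rewrite momM_prod_design // -[X]submxK mulmx_block /Amat.
case/eq_block_mx => -> _ _ _.
by rewrite -!mulmxA -mulmxDr row_M1_mul w0 mulr0 scale0r.
Qed.

Lemma M2_ginv_mul_Q2 M2g : ginv (M2 g a) M2g ->
  M2 g a *m M2g *m col_mx (0 : 'M[R]_(1, s2)) K = col_mx 0 K.
Proof.
move=> M2_ginv; have /sub_trmxP[X AX] := feasible_wa.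
move: AX; rewrite momM_prod_design // -[X]submxK mulmx_block /Amat.
case/eq_block_mx => _ _ _ ->.
by rewrite -!scalemxAl -!mulmxA !scalemxAr -!mulmxDr !mulmxA M2_ginv.
Qed.

Lemma prod_design_mulmxGA M2g :
  (forall i, 0 < lambda i) -> Q1^T *m (const_mx 1 : 'cV[R]_v1) = 0 ->
  prob_vec w -> (forall i, 0 < w i) -> ginv (M2 g a) M2g ->
  momM lambda g (prod_design w a)
    *m block_mx (invmx (M1 lambda w)) 0 0 ((\sum_i lambda i * w i)^-1 *: M2g)
    *m Amat Q1 K = Amat Q1 K.
Proof.
move=> lambda_gt0 Q1_sum0 w_prob w_gt0 M2_ginv.
have M1_unit := M1_unitmx lambda_gt0 w_gt0.
have c_neq0 := sum_lambda_w_neq0 lambda_gt0 w_prob.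
have M2gQ2 := M2_ginv_mul_Q2 M2_ginv.
have e1_Q2 : (M2 g a *m e1)^T *m M2g *m col_mx 0 K = 0.
  rewrite trmx_mul M2_sym -!mulmxA (mulmxA (M2 g a)) M2gQ2.
  by rewrite tr_col_mx mul_row_col trmx0 mul0mx mulmx0 addr0.
rewrite momM_prod_design // /Amat !mulmx_block !(mulmx0, mul0mx, addr0, add0r).
congr block_mx.
- by rewrite mulmxV // mul1mx.
- rewrite -!mulmxA -scalemxAl -scalemxAr (mulmxA (M2 g a *m e1)^T) e1_Q2.
  by rewrite scaler0 !mulmx0.
- by rewrite -2!mulmxA (mulmxA _ (invmx _)) (tr_const_mul_M1_inv M1_unit Q1_sum0) mulmx0.
- by rewrite -scalemxAr -!scalemxAl scalerA mulVf // scale1r M2gQ2.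
Qed.

End ProductDesign.

Local Notation gbar a := (\sum_k a k *: g k).
Local Notation shear c := (block_mx 1%:M 0 c 1%:M : 'M[R]_(1 + v2)).

Lemma M2_block a : \sum_k a k = 1 ->
  M2 g a = block_mx 1%:M (gbar a)^T (gbar a) (\sum_k a k *: (g k *m (g k)^T)).
Proof.
move=> a_sum1; rewrite /M2.
under eq_bigr => k _ do rewrite hvec_mul_tr scale_block_mx.
rewrite summx_block_mx -scaler_suml a_sum1 scale1r raddf_sum; congr block_mx.
by apply: eq_bigr => k _; rewrite /= linearZ.
Qed.

Lemma M2_shear_factor a : \sum_k a k = 1 ->
  M2 g a = shear (gbar a) *m block_mx 1%:M 0 0 (Smat g a) *m (shear (gbar a))^T.
Proof.
move=> a_sum1; rewrite M2_block // tr_block_mx !trmx1 !trmx0 !mulmx_block.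
rewrite !(mulmx0, mul0mx, mulmx1, mul1mx, addr0, add0r) /Smat addrC subrK.
by congr block_mx; rewrite mul1mx.
Qed.

Lemma ginv_M2_of_ginv_Smat a Sg : \sum_k a k = 1 -> ginv (Smat g a) Sg ->
  ginv (M2 g a) ((shear (- gbar a))^T *m block_mx 1%:M 0 0 Sg *m shear (- gbar a)).
Proof.
move=> a_sum1 S_ginv; rewrite /ginv M2_shear_factor //; apply: ginv_congruence.
  rewrite mulmx_block !(mulmx0, mul0mx, mulmx1, mul1mx, addr0, add0r).
  by rewrite addNr -scalar_mx_block.
rewrite !mulmx_block !(mulmx0, mul0mx, mulmx1, mul1mx, addr0, add0r) S_ginv.
by congr block_mx; rewrite mul1mx.
Qed.

Lemma shear_ginv_mul_Q2 a Sg s2 (K : 'M[R]_(v2, s2)) :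
  (shear (- gbar a))^T *m block_mx 1%:M 0 0 Sg *m shear (- gbar a) *m col_mx 0 K =
  col_mx (- ((gbar a)^T *m (Sg *m K))) (Sg *m K).
Proof.
rewrite tr_block_mx !trmx1 !trmx0 -!mulmxA !mul_block_col.
by rewrite !(mulmx0, mul0mx, mul1mx, add0r, addr0) linearN mulNmx.
Qed.

Section CenteredDesign.
Variables (xi : 'I_v1 -> 'I_d -> R) (w : 'I_v1 -> R) (a : 'I_d -> R).
Hypothesis marg_xi : forall i, marg_treat xi i = w i.

Lemma row_centered_mx i :
  row i (\matrix_(i, r) (\sum_k (xi i k - w i * a k) * g k r ord0)) =
  \sum_k (xi i k - w i * a k) *: (g k)^T.
Proof. by apply/rowP => r; rewrite !mxE summxE; apply: eq_bigr => k _; rewrite !mxE. Qed.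

Lemma sum_tr_hvec_mul_centered i p (z : 'M[R]_(v2, p)) :
  \sum_k xi i k *: ((hvec g k)^T *m col_mx (- ((gbar a)^T *m z)) z) =
  (\sum_k (xi i k - w i * a k) *: (g k)^T) *m z.
Proof.
have gbar_tr : (gbar a)^T = \sum_k a k *: (g k)^T.
  by rewrite raddf_sum; apply: eq_bigr => k _; rewrite /= linearZ.
under eq_bigr => k _ do rewrite tr_hvec_mul_col addrC -mulmxBl scalemxAl.
rewrite -mulmx_suml gbar_tr; congr (_ *m _).
under eq_bigr => k _ do rewrite scalerBr.
under [RHS]eq_bigr => k _ do rewrite scalerBl -scalerA.
by rewrite !sumrB -scaler_suml -scaler_sumr -[\sum_k xi i k]/(marg_treat xi i) marg_xi.
Qed.

Lemma momM_cross_mul_centered p (z : 'M[R]_(v2, p)) :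
  momM_cross xi *m col_mx (- ((gbar a)^T *m z)) z =
  \matrix_i (lambda i *: ((\sum_k (xi i k - w i * a k) *: (g k)^T) *m z)).
Proof.
apply/row_matrixP => i; rewrite row_mul !rowK -sum_tr_hvec_mul_centered.
by rewrite -scalemxAl mulmx_suml; under eq_bigr => k _ do rewrite -scalemxAl.
Qed.

Lemma momM_cov_mul_centered p (z : 'M[R]_(v2, p)) :
  momM_cov xi *m col_mx (- ((gbar a)^T *m z)) z =
  col_mx (\sum_i lambda i *: ((\sum_k (xi i k - w i * a k) *: (g k)^T) *m z))
    ((\sum_i \sum_k (lambda i * xi i k) *: (g k *m (g k)^T)
      - (\sum_i \sum_k (lambda i * xi i k) *: g k) *m (gbar a)^T) *m z).
Proof.
rewrite /momM_cov mulmx_suml.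
under eq_bigr => i _ do rewrite mulmx_suml.
under eq_bigr => i _ do under eq_bigr => k _ do
  rewrite -scalemxAl -mulmxA {1}/hvec mul_col_mx const_mx11 mul1mx scale_col_mx.
under eq_bigr => i _ do rewrite summx_col_mx.
rewrite summx_col_mx; congr col_mx.
  apply: eq_bigr => i _; rewrite -sum_tr_hvec_mul_centered scaler_sumr.
  by apply: eq_bigr => k _; rewrite scalerA mulrC.
rewrite mulmxBl !mulmx_suml -sumrB; apply: eq_bigr => i _.
rewrite !mulmx_suml -sumrB; apply: eq_bigr => k _.
rewrite -!scalemxAl -scalerBr mulrC; congr (_ *: _).
by rewrite tr_hvec_mul_col mulmxDr addrC mulmxN !mulmxA.
Qed.

Lemma tr_momM_cross_mul_M1_inv s1 (Q1 : 'M[R]_(v1, s1)) :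
  (forall i, 0 < lambda i) -> (forall i, 0 < w i) ->
  Q1^T *m (const_mx 1 : 'cV[R]_v1) = 0 ->
  (\matrix_(r < v2, i < v1) ((w i)^-1 * \sum_(k < d) xi i k * g k r ord0)) *m Q1 = 0 ->
  (momM_cross xi)^T *m invmx (M1 lambda w) *m Q1 = 0.
Proof.
move=> lambda_gt0 w_gt0 Q1_sum0 Q1_orth.
set Z := \matrix_i ((w i)^-1 *: \sum_k xi i k *: (hvec g k)^T).
have E_M1Z : momM_cross xi = M1 lambda w *m Z.
  apply/row_matrixP => i; rewrite row_M1_mul !rowK scalerA -mulrA.
  by rewrite mulfV ?mulr1 // gt_eqF.
have ZT : Z^T = col_mx (const_mx 1)
                 (\matrix_(r, i) ((w i)^-1 * \sum_k xi i k * g k r ord0)).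
  apply/matrixP => j i; rewrite !mxE summxE.
  under eq_bigr => k _ do rewrite !mxE.
  case: splitP => j' _; rewrite !mxE //.
  under eq_bigr => k _ do rewrite mulr1.
  by rewrite -[\sum_k xi i k]/(marg_treat xi i) marg_xi mulVf // gt_eqF.
rewrite E_M1Z trmx_mul tr_M1 mulmxK ?M1_unitmx // ZT mul_col_mx Q1_orth.
by rewrite const_mul_eq0 // col_mx0.
Qed.

Lemma centered_design_mulmxGA s1 s2 (Q1 : 'M[R]_(v1, s1)) (K : 'M[R]_(v2, s2)) Sg :
  (forall i, 0 < lambda i) -> (forall i, 0 < w i) ->
  Q1^T *m (const_mx 1 : 'cV[R]_v1) = 0 ->
  (\matrix_(r < v2, i < v1) ((w i)^-1 * \sum_(k < d) xi i k * g k r ord0)) *m Q1 = 0 ->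
  (\matrix_(i < v1, r < v2) (\sum_(k < d) (xi i k - w i * a k) * g k r ord0))
    *m Sg *m K = 0 ->
  ((\sum_i lambda i * w i)^-1 *:
     (\sum_i \sum_k (lambda i * xi i k) *: (g k *m (g k)^T)
      - (\sum_i \sum_k (lambda i * xi i k) *: g k) *m (gbar a)^T)) *m Sg *m K = K ->
  momM lambda g xi
    *m block_mx (invmx (M1 lambda w)) 0 0 ((\sum_i lambda i * w i)^-1 *:
         ((shear (- gbar a))^T *m block_mx 1%:M 0 0 Sg *m shear (- gbar a)))
    *m Amat Q1 K = Amat Q1 K.
Proof.
move=> lambda_gt0 w_gt0 Q1_sum0 Q1_orth centered_orth cov_K.
have centered0 i : (\sum_k (xi i k - w i * a k) *: (g k)^T) *m (Sg *m K) = 0.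
  by rewrite -row_centered_mx -row_mul mulmxA centered_orth row0.
have M1_marg : M1 lambda (marg_treat xi) = M1 lambda w.
  by apply/matrixP => i j; rewrite !mxE marg_xi.
rewrite momM_block M1_marg /Amat !mulmx_block !(mulmx0, mul0mx, addr0, add0r).
rewrite -[_ *m (_ *: _) *m _]mulmxA -[_ *m (_ *: _) *m _]mulmxA -!scalemxAl.
rewrite shear_ginv_mul_Q2 -!scalemxAr; congr block_mx.
- by rewrite mulmxV ?mul1mx ?M1_unitmx.
- rewrite momM_cross_mul_centered; apply/row_matrixP => i.
  by rewrite linearZ /= rowK centered0 !scaler0 row0.
- exact: tr_momM_cross_mul_M1_inv.
- rewrite momM_cov_mul_centered scale_col_mx [X in col_mx (_ *: X) _]big1.
    by rewrite scaler0 scalemxAl mulmxA cov_K.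
  by move=> i _; rewrite centered0 scaler0.
Qed.

End CenteredDesign.

End Designs.

Unset Implicit Arguments.

Theorem theorem3 (R : realType) (v1 v2 d s1 s2 : nat)
  (lambda : 'I_v1 -> R) (g : 'I_d -> 'cV[R]_v2)
  (Q1 : 'M[R]_(v1, s1)) (K : 'M[R]_(v2, s2))
  (Phi : 'M[R]_(s1 + s2) -> R) (wst : 'I_v1 -> R) (ast : 'I_d -> R) :
  (forall i, 0 < lambda i) ->
  \rank Q1 = s1 ->
  Q1^T *m (const_mx 1 : 'cV[R]_v1) = 0 ->
  (forall i, row i Q1 != 0) ->
  \rank K = s2 ->
  information_function Phi ->
  eigenvalue_based Phi ->
  prob_vec wst -> prob_vec ast ->
  Phi_optimal lambda g Q1 K Phi (prod_design wst ast) ->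
  (forall (M2g : 'M[R]_(1 + v2)) (xi : 'I_v1 -> 'I_d -> R),
     ginv (M2 g ast) M2g ->
     design xi ->
     momM lambda g xi
       *m block_mx (invmx (M1 lambda wst)) 0 0
            ((\sum_(i < v1) lambda i * wst i)^-1 *: M2g)
       *m Amat Q1 K = Amat Q1 K ->
     Phi_optimal lambda g Q1 K Phi xi)
  /\
  (forall (Sg : 'M[R]_v2) (xi : 'I_v1 -> 'I_d -> R),
     ginv (Smat g ast) Sg ->
     design xi ->
     (* (a) *)
     (forall i, marg_treat xi i = wst i) ->
     (* (b) *)
     (\matrix_(r < v2, i < v1)
        ((wst i)^-1 * \sum_(k < d) xi i k * g k r ord0)) *m Q1 = 0 ->
     (* (c) *)
     (\matrix_(i < v1, r < v2)
        (\sum_(k < d) (xi i k - wst i * ast k) * g k r ord0)) *m Sg *m K = 0 ->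
     (* (d) *)
     ((\sum_(i < v1) lambda i * wst i)^-1 *:
        (\sum_(i < v1) \sum_(k < d) (lambda i * xi i k) *: (g k *m (g k)^T)
         - (\sum_(i < v1) \sum_(k < d) (lambda i * xi i k) *: g k)
             *m (\sum_(k < d) ast k *: g k)^T)) *m Sg *m K = K ->
     Phi_optimal lambda g Q1 K Phi xi).
Proof.
move=> lambda_gt0 _ Q1_sum0 Q1_rows _ _ _ w_prob [_ a_sum1] prod_opt.
have [_ prod_feasible _] := prod_opt.
have w_gt0 := prod_design_weights_gt0 a_sum1 prod_feasible Q1_rows w_prob.1.
have prod_GA M2g (M2_ginv : ginv (M2 g ast) M2g) :=
  prod_design_mulmxGA a_sum1 prod_feasible lambda_gt0 Q1_sum0 w_prob w_gt0 M2_ginv.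
split=> [M2g xi M2_ginv xi_design xi_GA | Sg xi S_ginv xi_design marg_xi b_xi c_xi d_xi].
  exact: Phi_optimal_of_mulmx prod_opt xi_design xi_GA (prod_GA _ M2_ginv).
have M2_ginv := ginv_M2_of_ginv_Smat a_sum1 S_ginv.
apply: Phi_optimal_of_mulmx prod_opt xi_design _ (prod_GA _ M2_ginv).
exact: (centered_design_mulmxGA (a := ast) marg_xi lambda_gt0 w_gt0 Q1_sum0 b_xi c_xi d_xi).
Qed.
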